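(* Let $(\Omega,c)$ be a network with states $a,x,z\in\Omega$ such that $c(u,z)=0$ for all $u\notin\{x,z\}$. Let $x=x_0,x_1,\dots,x_k=a$ be any sequence of states such that there is some $\rho>0$ for which $c(x_{i-1},x_i)\ge\rho^{-1}c(x,z)$ for $i=1,\dots,k$. Then, for the Markov chain $(X_t)$ associated with the network, $$\mathbb P\{\tau_a<\tau_z\mid X_0=x\}\ge\frac{1}{k\rho+1}.$$
   Context: A network $(\Omega,c)$ consists of a finite state space $\Omega$ and a symmetric function $c:\Omega\times\Omega\to\mathbb R_{\ge0}$ (the conductance). Its associated Markov chain has transition probabilities $P(u,v)=c(u,v)/\sum_{w\in\Omega}c(u,w)$. For a state $s$, $\tau_s=\min\{t\ge0: X_t=s\}$. *)

From HB Require Import structures.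
From mathcomp Require Import all_boot all_order all_algebra.
From mathcomp Require Import all_classical all_reals all_analysis.
Import numFieldNormedType.Exports.
Set Implicit Arguments. Unset Strict Implicit. Unset Printing Implicit Defensive.
Import Order.TTheory GRing.Theory Num.Theory.
Local Open Scope ring_scope.

Section Network.
Variables (R : realType) (Omega : finType) (c : Omega -> Omega -> R).

Definition trans (u v : Omega) : R := c u v / \sum_(w : Omega) c u w.

(* hitn a z n u = P_u{ tau_a <= n and tau_a < tau_z }, by first-step analysis *)
Fixpoint hitn (a z : Omega) (n : nat) (u : Omega) : R :=
  if u == z then 0
  else if u == a then 1
  else match n with
       | 0%N => 0
       | n'.+1 => \sum_(v : Omega) trans u v * hitn a z n' v
       end.

(* P_u{ tau_a < tau_z } : limit of the nondecreasing sequence above *)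
Definition hit_before (a z u : Omega) : R := limn (fun n : nat => (hitn a z n u : R^o)).

Definition connected_network : Prop :=
  forall u v : Omega, connect (fun s t => 0 < c s t) u v.
End Network.

From HB Require Import structures.
From mathcomp Require Import all_boot all_order all_algebra.
From mathcomp Require Import all_classical all_reals all_analysis.
From mathcomp Require Import ring lra zify.
Import numFieldNormedType.Exports.
Import Order.TTheory GRing.Theory Num.Theory.
Set Implicit Arguments. Unset Strict Implicit. Unset Printing Implicit Defensive.
Local Open Scope ring_scope.

(* The voltage h u := P_u{tau_a < tau_z} is harmonic off {a, z}, so its
   Dirichlet energy equals twice the current c(x,z) h(x) flowing into z, and
   the two orientations of the edge {x,z} carry 2 c(x,z) h(x)^2 of it.  After
   loop erasure the path x_0 .. x_k is simple and, z being a pendant vertex,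
   avoids z; so its edges carry at most c(x,z) h(x) (1 - h(x)).  Cauchy-Schwarz
   along the path turns this into (1 - h(x))^2 <= k rho h(x) (1 - h(x)). *)

Section HittingProbability.
Variables (R : realType) (Omega : finType) (c : Omega -> Omega -> R).
Hypothesis c_ge0 : forall u v, 0 <= c u v.
Variables a z : Omega.
Local Open Scope classical_set_scope.

Lemma trans_ge0 u v : 0 <= trans c u v.
Proof. by rewrite /trans divr_ge0 // sumr_ge0. Qed.

(* [trans c u] is a probability unless [u] is isolated, where it is [0]. *)
Lemma sum_trans_le1 u : \sum_v trans c u v <= 1.
Proof.
rewrite /trans -mulr_suml; have [->|S0] := eqVneq (\sum_w c u w) 0.
  by rewrite invr0 mulr0.
by rewrite mulfV.
Qed.

Lemma hitn_ge0 n u : 0 <= hitn c a z n u.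
Proof.
elim: n u => [|n IHn] u /=; case: (u == z) => //; case: (u == a) => //.
by apply: sumr_ge0 => v _; rewrite mulr_ge0 ?trans_ge0.
Qed.

Lemma hitn_le1 n u : hitn c a z n u <= 1.
Proof.
elim: n u => [|n IHn] u /=; case: (u == z) => //; case: (u == a) => //.
apply: le_trans (sum_trans_le1 u); apply: ler_sum => v _.
by rewrite ler_piMr ?trans_ge0.
Qed.

Lemma hitnS n u : hitn c a z n.+1 u =
  if u == z then 0 else if u == a then 1
  else \sum_v trans c u v * hitn c a z n v.
Proof. by []. Qed.

Lemma hitn_leS n u : hitn c a z n u <= hitn c a z n.+1 u.
Proof.
elim: n u => [|n IHn] u; rewrite hitnS.
  rewrite [hitn _ _ _ 0 _]/=; case: (u == z) => //; case: (u == a) => //.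
  by apply: sumr_ge0 => v _; rewrite mulr_ge0 ?trans_ge0 ?hitn_ge0.
rewrite hitnS; case: (u == z) => //; case: (u == a) => //.
by apply: ler_sum => v _; rewrite ler_wpM2l ?trans_ge0.
Qed.

Lemma hitn_cvg u : (fun n => hitn c a z n u) @ \oo --> hit_before c a z u.
Proof.
suff : cvgn (fun n => hitn c a z n u) by [].
apply: nondecreasing_is_cvgn; first by apply/nondecreasing_seqP => n; apply: hitn_leS.
by exists 1 => _ [n _ <-]; apply: hitn_le1.
Qed.

Lemma hit_before_harmonic u : u != z -> u != a ->
  hit_before c a z u = \sum_v trans c u v * hit_before c a z v.
Proof.
move=> uz ua.
have step_cvg : (fun n => \sum_v trans c u v * hitn c a z n v) @ \oo -->
    hit_before c a z u.
  have -> : (fun n => \sum_v trans c u v * hitn c a z n v) =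
      (fun n => hitn c a z n.+1 u).
    by apply: funext => n; rewrite hitnS (negbTE uz) (negbTE ua).
  by rewrite (cvg_shiftS (fun n => hitn c a z n u)); exact: hitn_cvg.
have sum_cvg : (fun n => \sum_v trans c u v * hitn c a z n v) @ \oo -->
    \sum_v trans c u v * hit_before c a z v.
  apply: (@cvg_big R^o Omega +%R 0 xpredT _ nat _ _ (fun v n => _)).
    exact: add_continuous.
  by move=> v _; apply: cvgMr; exact: hitn_cvg.
exact: cvg_unique _ step_cvg sum_cvg.
Qed.

Lemma hit_before_target : a != z -> hit_before c a z a = 1.
Proof.
move=> az; rewrite /hit_before (_ : (fun n => _) = fun=> 1) ?lim_cst //.
by apply: funext => -[|n] /=; rewrite (negbTE az) eqxx.
Qed.

Lemma hit_before_avoided : hit_before c a z z = 0.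
Proof.
rewrite /hit_before (_ : (fun n => _) = fun=> 0) ?lim_cst //.
by apply: funext => -[|n] /=; rewrite eqxx.
Qed.

End HittingProbability.

Lemma loop_erasure (T : Type) (e : T -> T -> Prop) (k : nat) (xs : nat -> T) :
  (forall i, (i < k)%N -> e (xs i) (xs i.+1)) ->
  exists k' (ys : nat -> T), [/\ (k' <= k)%N, ys 0%N = xs 0%N, ys k' = xs k,
    forall i, (i < k')%N -> e (ys i) (ys i.+1) &
    forall i j, (i <= k')%N -> (j <= k')%N -> ys i = ys j -> i = j].
Proof.
elim/ltn_ind: k xs => k IH xs xs_edge.
have [[i [j [ij jk xs_ij]]]|simple] :=
  pselect (exists i j, [/\ (i < j)%N, (j <= k)%N & xs i = xs j]); last first.
  exists k, xs; split=> // i j ik jk xs_ij.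
  by case: (ltngtP i j) => // [ij|ji]; exfalso; apply: simple;
    [exists i, j | exists j, i].
pose d := (j - i)%N; pose ys n := if (n <= i)%N then xs n else xs (n + d)%N.
have ysE n : (i <= n)%N -> ys n = xs (n + d)%N.
  move=> iN; rewrite /ys; case: leqP => // ni.
  have -> : n = i by lia.
  by rewrite xs_ij /d subnKC // ltnW.
have ys_edge n : (n < k - d)%N -> e (ys n) (ys n.+1).
  move=> nk; have [ni|ni] := ltnP n i.
    by rewrite /ys ni ltnW //; apply: xs_edge; lia.
  by rewrite !ysE ?(leqW ni) // addSn; apply: xs_edge; lia.
have [|k' [zs [k'k zs0 zsk zs_edge zs_inj]]] := IH (k - d)%N _ ys ys_edge.
  by rewrite /d; lia.
exists k', zs; split=> //; first exact: leq_trans k'k (leq_subr _ _).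
by rewrite zsk ysE ?subnK // /d; lia.
Qed.

Lemma ler_sum_inj (R : numDomainType) (I T : finType) (P : pred T)
    (g : I -> T) (F : T -> R) :
  injective g -> (forall i, P (g i)) -> (forall t, P t -> 0 <= F t) ->
  \sum_i F (g i) <= \sum_(t | P t) F t.
Proof.
move=> g_inj Pg F_ge0; rewrite -(big_imset _ (in2W g_inj)) /=.
rewrite [X in _ <= X]big_mkcond [X in X <= _]big_mkcond /=.
apply: ler_sum => t _; case: imsetP => [[i _ ->]|_]; first by rewrite Pg.
by case: ifP => // /F_ge0.
Qed.

(* Both orientations of the edges of a simple path are distinct pairs. *)
Lemma sum_simple_path_le (R : numDomainType) (T : finType) (A : pred T)
    (F : T -> T -> R) (k : nat) (ys : nat -> T) :
  (forall u v, 0 <= F u v) -> (forall u v, F u v = F v u) ->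
  (forall i j, (i <= k)%N -> (j <= k)%N -> ys i = ys j -> i = j) ->
  (forall i, (i <= k)%N -> A (ys i)) ->
  2 * \sum_(i < k) F (ys i) (ys i.+1) <= \sum_(u | A u) \sum_(v | A v) F u v.
Proof.
move=> F_ge0 F_sym ys_inj ysA.
pose g (e : 'I_k + 'I_k) :=
  match e with inl i => (ys i, ys i.+1) | inr i => (ys i.+1, ys i) end.
have g_inj : injective g.
  move=> [i|i] [j|j] [e1 e2].
  - by congr inl; apply: val_inj; apply: ys_inj e1; apply: ltnW.
  - by have := ys_inj _ _ (ltnW (ltn_ord i)) (ltn_ord j) e1;
      have := ys_inj _ _ (ltn_ord i) (ltnW (ltn_ord j)) e2; lia.
  - by have := ys_inj _ _ (ltn_ord i) (ltnW (ltn_ord j)) e1;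
      have := ys_inj _ _ (ltnW (ltn_ord i)) (ltn_ord j) e2; lia.
  - by congr inr; apply: val_inj; apply: ys_inj e2; apply: ltnW.
have := @ler_sum_inj R _ _ (fun p => A p.1 && A p.2) _ (fun p => F p.1 p.2) g_inj.
rewrite pair_big_dep big_sumType /=; under [X in _ + X]eq_bigr do rewrite F_sym.
rewrite mulr2n mulrDl mul1r; apply.
  by case=> i /=; rewrite !ysA // ltnW.
by move=> p _; apply: F_ge0.
Qed.

Lemma simple_path_avoids_pendant (R : numDomainType) (T : finType)
    (c : T -> T -> R) (w z : T) (k : nat) (ys : nat -> T) :
  (forall u v, c u v = c v u) -> (forall u, u != w -> u != z -> c u z = 0) ->
  (forall i, (i < k)%N -> 0 < c (ys i) (ys i.+1)) ->
  (forall i j, (i <= k)%N -> (j <= k)%N -> ys i = ys j -> i = j) ->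
  ys 0%N != z -> ys k != z -> forall i, (i <= k)%N -> ys i != z.
Proof.
move=> c_sym z_pendant ys_edge ys_inj ys0 ysk i ik; apply/eqP => ysi.
have i_gt0 : (0 < i)%N by case: i ysi {ik} => // ysi; rewrite ysi eqxx in ys0.
have ilt : (i < k)%N.
  by rewrite ltn_neqAle ik andbT; apply/eqP => ik'; rewrite -ik' ysi eqxx in ysk.
have nbr j : (j <= k)%N -> j != i -> 0 < c (ys j) z -> ys j = w.
  move=> jk ji; apply: contraTeq => ysjw; rewrite z_pendant ?ltxx //.
  by apply: contraNneq ji => ysjz; apply/eqP/ys_inj; rewrite ?ysi.
have next : ys i.+1 = w.
  apply: nbr => //; first by lia.
  by rewrite c_sym -ysi ys_edge.
have prev : ys i.-1 = w.
  apply: nbr; [lia | lia |].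
  by have := ys_edge i.-1; rewrite prednK // -ysi; apply; lia.
by have := ys_inj i.-1 i.+1; rewrite prev next => /(_ _ _ erefl); lia.
Qed.

Lemma connected_in_edge (R : realType) (T : finType) (c : T -> T -> R) (u v : T) :
  (forall s t, c s t = c t s) -> connected_network c -> u != v ->
  exists2 w, w != v & 0 < c w v.
Proof.
move=> c_sym c_conn uv; have [//|no_edge] := pselect (exists2 w, w != v & 0 < c w v).
have closed_v : fingraph.closed (fun s t => 0 < c s t) (predC1 v).
  move=> s t st; rewrite !inE.
  have [sv|sv] := eqVneq s v; have [tv|tv] := eqVneq t v => //; exfalso.
    by apply: no_edge; exists t; last rewrite c_sym -sv.
  by apply: no_edge; exists s; last rewrite -tv.
by have := closed_connect closed_v (c_conn u v); rewrite !inE eqxx uv.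
Qed.

Lemma sqr_sum_le (R : realFieldType) (k : nat) (t : 'I_k -> R) :
  (\sum_i t i) ^+ 2 <= k%:R * \sum_i t i ^+ 2.
Proof.
have : 0 <= \sum_i \sum_j (t i - t j) ^+ 2.
  by apply: sumr_ge0 => i _; apply: sumr_ge0 => j _; apply: sqr_ge0.
have -> : \sum_i \sum_j (t i - t j) ^+ 2 = \sum_i \sum_(j < k) t i ^+ 2
    + \sum_(i < k) \sum_j t j ^+ 2 - 2 * \sum_i \sum_j t i * t j.
  rewrite mulr_sumr -big_split -sumrB; apply: eq_bigr => i _.
  rewrite mulr_sumr -big_split -sumrB; apply: eq_bigr => j _.
  by change ((t i - t j) ^+ 2 = t i ^+ 2 + t j ^+ 2 - 2 * (t i * t j)); ring.
have -> : \sum_i \sum_(j < k) t i ^+ 2 = k%:R * \sum_i t i ^+ 2.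
  by rewrite mulr_sumr; apply: eq_bigr => i _; rewrite sumr_const card_ord mulr_natl.
have -> : \sum_(i < k) \sum_j t j ^+ 2 = k%:R * \sum_i t i ^+ 2.
  by rewrite sumr_const card_ord mulr_natl.
have -> : \sum_i \sum_j t i * t j = (\sum_i t i) ^+ 2.
  by rewrite expr2 mulr_suml; apply: eq_bigr => i _; rewrite mulr_sumr.
lra.
Qed.

Lemma inv_le_of_sqr_le (R : realFieldType) (K p : R) :
  0 <= K -> (1 - p) ^+ 2 <= K * (p * (1 - p)) -> 1 / (K + 1) <= p.
Proof.
move=> K_ge0 sqr_le; rewrite ler_pdivrMr; last by lra.
have [p_ge1|p_lt1] := leP 1 p; nra.
Qed.

Section Voltage.
Variables (R : realType) (Omega : finType) (c : Omega -> Omega -> R).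
Hypotheses (c_ge0 : forall u v, 0 <= c u v) (c_sym : forall u v, c u v = c v u).
Variable h : Omega -> R.

Definition current u := \sum_v c u v * (h u - h v).

Lemma sum_current : \sum_u current u = 0.
Proof.
rewrite /current; under eq_bigr do rewrite (eq_bigr _ (fun v _ => mulrBr _ _ _)) sumrB.
rewrite sumrB exchange_big /=; apply/eqP; rewrite subr_eq0; apply/eqP.
by apply: eq_bigr => u _; apply: eq_bigr => v _; rewrite c_sym.
Qed.

Lemma energy_current :
  \sum_u \sum_v c u v * (h u - h v) ^+ 2 = 2 * \sum_u h u * current u.
Proof.
have split_sq u v : c u v * (h u - h v) ^+ 2 =
    h u * (c u v * (h u - h v)) + h v * (c v u * (h v - h u)).
  by rewrite c_sym; ring.
under eq_bigr do under eq_bigr do rewrite split_sq.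
rewrite /current; under eq_bigr do rewrite big_split /=.
rewrite big_split /= [X in _ + X]exchange_big /=.
by under eq_bigr do rewrite -mulr_sumr; rewrite mulr2n mulrDl mul1r.
Qed.

Lemma current_harmonic u : h u = \sum_v trans c u v * h v -> current u = 0.
Proof.
move=> hu; rewrite /current.
have [S0|S0] := eqVneq (\sum_v c u v) 0.
  have cu0 := psumr_eq0P (fun w _ => c_ge0 u w) S0.
  by apply: big1 => v _; rewrite cu0 ?mul0r.
under eq_bigr do rewrite mulrBr; rewrite sumrB -mulr_suml hu /trans.
apply/eqP; rewrite subr_eq0 mulr_sumr; apply/eqP; apply: eq_bigr => v _.
by rewrite mulrA mulrCA mulfV // mulr1.
Qed.

Variables a x z : Omega.
Hypotheses (haz : a != z) (hxz : x != z) (ha : h a = 1) (hz : h z = 0).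
Hypothesis h_harm : forall u, u != z -> u != a -> h u = \sum_v trans c u v * h v.
Hypothesis z_pendant : forall u, u != x -> u != z -> c u z = 0.

Lemma current_pendant : current z = - (c x z * h x).
Proof.
rewrite /current hz (bigD1 x) //= big1 ?addr0; first by rewrite c_sym sub0r mulrN.
move=> v vx; have [->|vz] := eqVneq v z; first by rewrite hz subrr mulr0.
by rewrite c_sym z_pendant // mul0r.
Qed.

Lemma energy_unit_voltage :
  \sum_u \sum_v c u v * (h u - h v) ^+ 2 = 2 * (c x z * h x).
Proof.
have current0 u : u != a -> u != z -> current u = 0.
  by move=> ua uz; apply: current_harmonic; apply: h_harm.
have current_a : current a = - current z.
  have := sum_current; rewrite (bigD1 a) //= (bigD1 z) 1?eq_sym //= big1 ?addr0.
    by move/eqP; rewrite addr_eq0 => /eqP.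
  by move=> u /andP[ua uz]; apply: current0.
rewrite energy_current (bigD1 a) //= big1 ?addr0.
  by rewrite ha mul1r current_a current_pendant opprK.
move=> u ua; have [->|uz] := eqVneq u z; first by rewrite hz mul0r.
by rewrite current0 // mulr0.
Qed.

Lemma energy_off_pendant :
  \sum_(u | u != z) \sum_(v | v != z) c u v * (h u - h v) ^+ 2 =
  2 * (c x z * h x * (1 - h x)).
Proof.
have edge_z u :
    c u z * (h u - h z) ^+ 2 = if u == x then c x z * h x ^+ 2 else 0.
  have [->|ux] := eqVneq u x; first by rewrite hz subr0.
  have [->|uz] := eqVneq u z; first by rewrite subrr expr2 !mulr0.
  by rewrite z_pendant // mul0r.
have sum_edge_z : \sum_(u | u != z) c u z * (h u - h z) ^+ 2 = c x z * h x ^+ 2.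
  rewrite (bigD1 x) //= edge_z eqxx big1 ?addr0 // => u /andP[_ ux].
  by rewrite edge_z (negbTE ux).
have := energy_unit_voltage; rewrite (bigD1 z) //=.
under [X in _ + X]eq_bigr => u _ do rewrite (bigD1 z) //=.
rewrite big_split /= sum_edge_z.
under eq_bigr do rewrite c_sym -opprB sqrrN.
rewrite (bigD1 x) //= edge_z eqxx big1 ?addr0 => [E|u ux]; first by lra.
by rewrite edge_z (negbTE ux).
Qed.

Lemma simple_path_voltage_ge (k : nat) (ys : nat -> Omega) (rho : R) :
  0 < rho -> 0 < c x z -> ys 0%N = x -> ys k = a ->
  (forall i, (i < k)%N -> rho^-1 * c x z <= c (ys i) (ys i.+1)) ->
  (forall i j, (i <= k)%N -> (j <= k)%N -> ys i = ys j -> i = j) ->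
  1 / (k%:R * rho + 1) <= h x.
Proof.
move=> rho_gt0 C_gt0 ys0 ysk ys_edge ys_inj; set C := c x z in C_gt0 ys_edge *.
have edge_gt0 i : (i < k)%N -> 0 < c (ys i) (ys i.+1).
  by move=> ik; apply: lt_le_trans (ys_edge i ik); rewrite mulr_gt0 ?invr_gt0.
have ys_z := simple_path_avoids_pendant c_sym z_pendant edge_gt0 ys_inj.
have {}ys_z : forall i, (i <= k)%N -> ys i != z by apply: ys_z; rewrite ?ys0 ?ysk.
pose d i := h (ys i.+1) - h (ys i).
pose Q := \sum_(i < k) c (ys i) (ys i.+1) * d i ^+ 2.
have Q_le : Q <= C * (h x * (1 - h x)).
  have := sum_simple_path_le (A := fun u => u != z)
    (F := fun u v => c u v * (h u - h v) ^+ 2) _ _ ys_inj ys_z.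
  rewrite energy_off_pendant //.
  have -> : \sum_(i < k) c (ys i) (ys i.+1) * (h (ys i) - h (ys i.+1)) ^+ 2 = Q.
    by apply: eq_bigr => i _; rewrite /d -opprB sqrrN.
  have F_ge0 u v : 0 <= c u v * (h u - h v) ^+ 2 by rewrite mulr_ge0 ?sqr_ge0.
  have F_sym u v : c u v * (h u - h v) ^+ 2 = c v u * (h v - h u) ^+ 2.
    by rewrite c_sym -opprB sqrrN.
  by move=> /(_ F_ge0 F_sym); rewrite /C; lra.
have sum_d : \sum_(i < k) d i = 1 - h x.
  by rewrite -(big_mkord xpredT d) telescope_sumr // ysk ys0 ha.
have d_sq_le i : (i < k)%N -> d i ^+ 2 <= rho / C * (c (ys i) (ys i.+1) * d i ^+ 2).
  move=> ik; rewrite mulrA ler_peMl ?sqr_ge0 //.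
  have -> : 1 = rho / C * (rho^-1 * C) by field; rewrite !gt_eqF.
  by rewrite ler_wpM2l ?ys_edge ?divr_ge0 ?ltW.
have sum_d_sq : \sum_(i < k) d i ^+ 2 <= rho * (h x * (1 - h x)).
  apply: le_trans (_ : rho / C * Q <= _).
    by rewrite /Q mulr_sumr; apply: ler_sum => i _; apply: d_sq_le.
  apply: le_trans (ler_wpM2l _ Q_le) _; first by rewrite divr_ge0 ?ltW.
  by rewrite -mulrA mulKf ?gt_eqF.
apply: inv_le_of_sqr_le; first by rewrite mulr_ge0 // ltW.
rewrite -mulrA; apply: le_trans (ler_wpM2l (ler0n _ k) sum_d_sq).
by rewrite -sum_d; apply: (sqr_sum_le (fun i : 'I_k => d i)).
Qed.

End Voltage.

Theorem lemmaC5 (R : realType) (Omega : finType) (c : Omega -> Omega -> R)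
  (c_ge0 : forall u v, 0 <= c u v) (c_sym : forall u v, c u v = c v u)
  (c_conn : connected_network c)
  (a x z : Omega) (haz : a != z) (hxz : x != z)
  (hz : forall u, u != x -> u != z -> c u z = 0)
  (k : nat) (xs : nat -> Omega) (hx0 : xs 0%N = x) (hxk : xs k = a)
  (rho : R) (hrho : 0 < rho)
  (hpath : forall i : nat, (0 < i <= k)%N -> c (xs i.-1) (xs i) >= rho^-1 * c x z) :
  hit_before c a z x >= 1 / (k%:R * rho + 1).
Proof.
have C_gt0 : 0 < c x z.
  have [w wz cwz] := connected_in_edge c_sym c_conn hxz.
  by have [<-|wx] := eqVneq w x; last by rewrite hz ?ltxx in cwz.
have xs_edge i : (i < k)%N -> rho^-1 * c x z <= c (xs i) (xs i.+1).
  by move=> ik; apply: (hpath i.+1); rewrite ik.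
have [k' [ys [k'k ys0 ysk ys_edge ys_inj]]] :=
  loop_erasure (e := fun u v => rho^-1 * c x z <= c u v) xs_edge.
rewrite hx0 in ys0; rewrite hxk in ysk.
have := simple_path_voltage_ge c_ge0 c_sym haz hxz (hit_before_target c haz)
  (hit_before_avoided c a z) (@hit_before_harmonic _ _ _ c_ge0 a z) hz
  hrho C_gt0 ys0 ysk ys_edge ys_inj.
have denom_gt0 (n : nat) : 0 < n%:R * rho + 1.
  by have := mulr_ge0 (ler0n R n) (ltW hrho); lra.
apply: le_trans; rewrite !div1r lef_pV2 ?posrE ?denom_gt0 //.
by rewrite lerD2r ler_wpM2r ?ler_nat // ltW.
Qed.
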